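(* Assume the Continuum Hypothesis. Every real Banach space $X$ with $\operatorname{dens} X = \operatorname{dens} X^* = \omega_1$ contains an overcomplete set.
   Context: $\operatorname{dens}$ denotes the density character. A subset $S$ of a Banach space $X$ with $|S| = \operatorname{dens} X$ is called overcomplete if every subset $\Lambda \subseteq S$ with $|\Lambda| = |S|$ is linearly dense in $X$ (its closed linear span is $X$). *)

From HB Require Import structures.
From mathcomp Require Import all_boot all_order all_algebra.
From mathcomp Require Import all_classical all_reals all_analysis.
Set Implicit Arguments. Unset Strict Implicit. Unset Printing Implicit Defensive.
Import Order.TTheory GRing.Theory Num.Theory.
Import numFieldNormedType.Exports.
Local Open Scope classical_set_scope.
Local Open Scope ring_scope.

(* |A| = aleph_1 : A is uncountable and admits a well-order all of whose
   initial segments are countable (i.e. a well-order of type omega_1). *)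
Definition is_aleph1 (T : Type) (A : set T) : Prop :=
  ~ countable A /\
  exists r : T -> T -> Prop,
    (forall x y, A x -> A y -> r x y \/ r y x) /\
    (forall x y, A x -> A y -> r x y -> r y x -> x = y) /\
    (forall x y z, A x -> A y -> A z -> r x y -> r y z -> r x z) /\
    (forall B, B `<=` A -> B !=set0 -> exists2 m, B m & forall y, B y -> r m y) /\
    (forall x, A x -> countable [set y | A y /\ r y x]).

Definition CH (R : realType) : Prop := is_aleph1 [set: R].

Definition dens_is_aleph1 (T : Type) (isdense : set T -> Prop) : Prop :=
  (exists D, isdense D /\ is_aleph1 D) /\
  (forall D, isdense D -> ~ countable D).

Definition dual_elt (R : realType) (X : normedModType R) (f : X -> R) : Prop :=
  (forall (a : R) (u v : X), f (a *: u + v) = a * f u + f v) /\ continuous f.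

(* D is a dense subset of X^* for the dual (operator) norm
   ||f|| = sup_{||x|| <= 1} |f x|. *)
Definition dual_dense (R : realType) (X : normedModType R)
    (D : set (X -> R)) : Prop :=
  D `<=` @dual_elt R X /\
  forall f, dual_elt f -> forall eps : R, 0 < eps ->
    exists2 g, D g & forall x : X, `|x| <= 1 -> `|f x - g x| <= eps.

Definition lin_span (R : realType) (X : normedModType R) (L : set X) : set X :=
  [set x | exists n (a : 'I_n -> R) (v : 'I_n -> X),
             (forall i, L (v i)) /\ x = \sum_(i < n) a i *: v i].

Definition linearly_dense (R : realType) (X : normedModType R) (L : set X) : Prop :=
  closure (lin_span L) = setT.

Definition card_is_dens (R : realType) (X : normedModType R) (S : set X) : Prop :=
  (exists D : set X, dense D /\ card_eq S D) /\
  (forall D : set X, dense D -> card_le S D).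

Definition overcomplete (R : realType) (X : normedModType R) (S : set X) : Prop :=
  card_is_dens S /\
  forall L : set X, L `<=` S -> card_eq L S -> linearly_dense L.

From HB Require Import structures.
From mathcomp Require Import all_boot all_order all_algebra.
From mathcomp Require Import all_classical all_reals all_analysis.
From mathcomp Require Import ring lra.
Set Implicit Arguments. Unset Strict Implicit. Unset Printing Implicit Defensive.
Import Order.TTheory GRing.Theory Num.Theory.
Import numFieldNormedType.Exports.
Local Open Scope classical_set_scope.
Local Open Scope ring_scope.
Local Open Scope card_scope.

(* Under CH fix a well-order of R of type omega_1.  The dual X^* has a dense
   subset of size omega_1 <= c, and a functional is determined by a sequence of
   approximants from it, so X^* injects into R^N and hence into R; pulling the
   well-order back, every functional has only countably many predecessors.  For
   each t in R, Baire's theorem gives a vector s_t on which every nonzero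
   functional of index below t is nonzero.  A functional F vanishing on a set
   L of such vectors can only vanish at s_t for t below the index of F, so L is
   countable unless F = 0; by Hahn-Banach every uncountable L is linearly
   dense. *)

Lemma card_le_inj T U (A : set T) (B : set U) (f : T -> U) :
  set_fun A B f -> set_inj A f -> A #<= B.
Proof.
move=> fAB finj; have [g] : $|{injfun A >-> B}| by apply/injfunPex; exists f.
exact: inj_card_le g.
Qed.

Lemma countableU T (A B : set T) : countable A -> countable B -> countable (A `|` B).
Proof.
move=> cA cB.
have -> : A `|` B = \bigcup_(b in [set: bool]) (if b then A else B).
  apply/seteqP; split=> [x [Ax|Bx]|x [[] _ ?]];
  [by exists true | by exists false | by left | by right].
by apply: bigcup_countable => // -[].
Qed.

Section aleph1_embedding.
Variables (T : Type) (U : choiceType) (A : set T) (B : set U) (r : T -> T -> Prop).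
Hypothesis r_total : forall x y, A x -> A y -> r x y \/ r y x.
Hypothesis r_antisym : forall x y, A x -> A y -> r x y -> r y x -> x = y.
Hypothesis r_least : forall C, C `<=` A -> C !=set0 -> exists2 m, C m & forall y, C y -> r m y.
Hypothesis r_countable : forall x, A x -> countable [set y | A y /\ r y x].
Hypothesis B_uncountable : ~ countable B.

Let lt x y := [/\ A x, A y, r x y & x <> y].

Let lt_wf : well_founded lt.
Proof.
move=> x; apply: contrapT => xNacc.
have Ax : A x by apply: contrapT => NAx; apply: xNacc; constructor => y [].
have [m [Am mNacc] m_least] := r_least (C := [set y | A y /\ ~ Acc lt y])
  (fun y => @proj1 _ _) (ex_intro _ x (conj Ax xNacc)).
apply: mNacc; constructor => y [Ay _ rym ym].
apply: contrapT => yNacc; apply: ym; apply: r_antisym => //.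
exact: m_least.
Qed.

Let fresh_value x (g : T -> U) : A x -> exists u, B u /\ forall y, lt y x -> g y <> u.
Proof.
move=> Ax; apply: contrapT => Nfresh; apply: B_uncountable.
apply: (sub_countable (B := g @` [set y | A y /\ r y x])).
  apply: subset_card_le => u Bu; apply: contrapT => Nimg; apply: Nfresh.
  by exists u; split=> // y [Ay _ ryx _] gyu; apply: Nimg; exists y.
exact: card_le_trans (card_image_le _ _) (r_countable Ax).
Qed.

Lemma aleph1_inj : exists2 h : T -> U, set_fun A B h & set_inj A h.
Proof.
have [u0 _] : B !=set0.
  by apply/set0P/negP => /eqP B0; apply: B_uncountable; rewrite B0.
pose fresh x (rec : forall y, lt y x -> U) :=
  xget u0 (fun u => B u /\ forall y (ltyx : lt y x), rec y ltyx <> u).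
pose h := Fix lt_wf (fun _ => U) fresh.
have hE : forall x, h x = fresh x (fun y _ => h y).
  apply: Fix_eq => x f g fg.
  suff -> : f = g by [].
  by apply: functional_extensionality_dep => y; apply: functional_extensionality_dep.
have h_fresh x : A x -> B (h x) /\ forall y, lt y x -> h y <> h x.
  by move=> Ax; rewrite hE; apply: (xgetPex u0 (fresh_value (fun y => h y) Ax)).
exists h => [x Ax|x y /set_mem Ax /set_mem Ay hxy]; first exact: (h_fresh x Ax).1.
apply: contrapT => xy; have [rxy|ryx] := r_total Ax Ay.
  by apply: (h_fresh y Ay).2 hxy; split.
by apply: (h_fresh x Ax).2 (esym hxy); split=> // yx; apply: xy.
Qed.

End aleph1_embedding.

Lemma aleph1_card_le T (U : choiceType) (A : set T) (B : set U) :
  is_aleph1 A -> ~ countable B -> A #<= B.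
Proof.
move=> [_ [r [r_total [r_antisym [_ [r_least r_countable]]]]]] B_uncountable.
have [h hAB h_inj] := aleph1_inj r_total r_antisym r_least r_countable B_uncountable.
exact: card_le_inj hAB h_inj.
Qed.

Section ternary_embedding.
Variable R : realType.

(* Ternary expansions with digits 0 and 1: the gaps let the first differing
   digit decide the order. *)
Let w : R := 3^-1.

Let w_gt0 : 0 < w. Proof. by rewrite invr_gt0. Qed.

Let w_ge0 : 0 <= w. Proof. exact: ltW. Qed.

Let geometric_tail a n : \sum_(a <= k < n) w ^+ k.+1 <= w ^+ a / 2.
Proof.
have [an|na] := leqP a n; last by rewrite big_geq ?(ltnW na) // divr_ge0 ?exprn_ge0.
have step k : w ^+ k.+1 = (- w ^+ k.+1 - - w ^+ k) / 2 by rewrite exprS /w; field.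
rewrite (eq_bigr _ (fun k _ => step k)) -mulr_suml.
rewrite (@telescope_sumr_eq _ _ _ (fun k => - w ^+ k)) //.
by rewrite ler_pM2r // opprK gerDr oppr_le0 exprn_ge0.
Qed.

Let digit (b : nat -> bool) k : R := if b k then w ^+ k.+1 else 0.

Let digit_ge0 b k : 0 <= digit b k.
Proof. by rewrite /digit; case: ifP => // _; rewrite exprn_ge0. Qed.

Let digit_sum (b : nat -> bool) n := \sum_(0 <= k < n) digit b k.

Let digit_sum_le b a n :
  digit_sum b n <= digit_sum b a + digit b a + w ^+ a.+1 / 2.
Proof.
have [na|an] := leqP n a.
  rewrite /digit_sum (big_cat_nat (leq0n n) na) /= -!addrA lerDl.
  rewrite !addr_ge0 ?divr_ge0 ?exprn_ge0 ?digit_ge0 //.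
  by apply: sumr_ge0 => k _; exact: digit_ge0.
rewrite /digit_sum (big_cat_nat (leq0n a) (ltnW an)) (big_ltn an) /= addrA lerD2l.
apply: le_trans (geometric_tail a.+1 n).
by apply: ler_sum_nat => k _; rewrite /digit; case: ifP => // _; rewrite exprn_ge0.
Qed.

Let digit_sum_has_sup b : has_sup (range (digit_sum b)).
Proof.
split; first by exists (digit_sum b 0), 0%N.
exists 1 => _ [n _ <-]; apply: le_trans (digit_sum_le b 0 n) _.
by rewrite /digit_sum /digit big_geq //= add0r expr1; case: (b 0%N); rewrite /w; lra.
Qed.

Let ternary b := sup (range (digit_sum b)).

Let ternary_lt b b' m : (forall k, (k < m)%N -> b k = b' k) ->
  b' m = false -> b m = true -> ternary b' < ternary b.
Proof.
move=> b_b' b'm bm.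
have same_prefix : digit_sum b' m = digit_sum b m.
  by apply: eq_big_nat => k /andP[_ km]; rewrite /digit b_b'.
apply: (@lt_le_trans _ _ (digit_sum b m.+1)).
  apply: (@le_lt_trans _ _ (digit_sum b m + w ^+ m.+1 / 2)).
    apply: ge_sup; first by exists (digit_sum b' 0), 0%N.
    by move=> _ [n _ <-]; have := digit_sum_le b' m n; rewrite same_prefix /digit b'm addr0.
  rewrite /digit_sum big_nat_recr //= ltrD2l /digit bm ltr_pdivrMr // ltr_pMr ?exprn_gt0 //.
  by rewrite ltr1n.
by apply: sup_upper_bound; [exact: digit_sum_has_sup | exists m.+1].
Qed.

Let ternary_inj : injective ternary.
Proof.
move=> b b' bb'; apply/funext => k; apply: contrapT => /eqP bk.
have [m /eqP bm m_min] := ex_minnP (ex_intro (fun k => b k != b' k) k bk).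
have agree j : (j < m)%N -> b j = b' j.
  by move=> jm; apply/eqP; apply: contraTT jm => /m_min; rewrite -leqNgt.
move: bm; case bmE : (b m); case b'mE : (b' m) => // _.
  by have := ternary_lt agree b'mE bmE; rewrite bb' ltxx.
have := ternary_lt (fun j jm => esym (agree j jm)) bmE b'mE.
by rewrite bb' ltxx.
Qed.

Lemma card_le_cantorR : [set: nat -> bool] #<= [set: R].
Proof. by apply/pcard_injP; exists ternary => b b' _ _; exact: ternary_inj. Qed.

Lemma card_le_seqR : [set: nat -> R] #<= [set: R].
Proof.
apply: card_le_trans card_le_cantorR.
pose cut (F : nat -> R) n :=
  if unpickle n is Some (i, q) then ratr q < F i else false.
apply/pcard_injP; exists cut => F F' _ _ FF'; apply/funext => i.
suff F_le F1 F2 : cut F1 = cut F2 -> F1 i <= F2 i.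
  by apply/eqP; rewrite eq_le !F_le.
move=> F12; rewrite leNgt; apply/negP => /rat_in_itvoo[q].
rewrite in_itv /= => /andP[F2q qF1].
have := congr1 (fun c => c (pickle (i, q))) F12; rewrite /cut /= pickleK.
by rewrite qF1 ltNge (ltW F2q).
Qed.

End ternary_embedding.

Section linear_graphs.
Variables (R : fieldType) (X : lmodType R).

Definition graph_linear (G : set (X * R)) :=
  forall (a : R) z w, G z -> G w -> G (a *: z.1 + w.1, a * z.2 + w.2).

Definition graph_functional (G : set (X * R)) :=
  forall x a b, G (x, a) -> G (x, b) -> a = b.

Definition graph_adjoin (G : set (X * R)) (x1 : X) (c : R) : set (X * R) :=
  [set z | exists y al l, G (y, al) /\ z = (y + l *: x1, al + l * c)].

Variables (G : set (X * R)) (x1 : X) (c : R).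
Hypotheses (G_linear : graph_linear G) (G00 : G (0, 0)).

Lemma graph_linearZ (a : R) y al : G (y, al) -> G (a *: y, a * al).
Proof. by move=> Gy; have := G_linear a Gy G00; rewrite /= !addr0. Qed.

Lemma graph_linearB y al y' al' : G (y, al) -> G (y', al') -> G (y' - y, al' - al).
Proof.
by move=> Gy Gy'; have := G_linear (-1) Gy Gy'; rewrite /= scaleN1r mulN1r !(addrC (- _)).
Qed.

Lemma graph_adjoin_sub : G `<=` graph_adjoin G x1 c.
Proof. by move=> [y al] Gy; exists y, al, 0; rewrite scale0r mul0r !addr0. Qed.

Lemma graph_adjoin_point : graph_adjoin G x1 c (x1, c).
Proof. by exists 0, 0, 1; rewrite scale1r mul1r !add0r. Qed.

Lemma graph_adjoin_linear : graph_linear (graph_adjoin G x1 c).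
Proof.
move=> a _ _ [y [al [l [Gy ->]]]] [y' [al' [l' [Gy' ->]]]] /=.
exists (a *: y + y'), (a * al + al'), (a * l + l'); split; first exact: G_linear Gy Gy'.
by congr pair; [rewrite scalerDr scalerA scalerDl addrACA | ring].
Qed.

Lemma graph_adjoin_functional : graph_functional G -> ~ (exists a, G (x1, a)) ->
  graph_functional (graph_adjoin G x1 c).
Proof.
move=> G_fun x1_new x a b [y [al [l [Gy [-> ->]]]]] [y' [al' [l' [Gy' [yy' ->]]]]].
have ll' : l = l'.
  apply: contrapT => /eqP; rewrite -subr_eq0 => ll'; apply: x1_new.
  have -> : x1 = (l - l')^-1 *: (y' - y).
    rewrite -[x1 in LHS](scalerK ll') scalerBl; congr (_ *: _); apply/eqP.
    by rewrite subr_eq addrAC -yy' addrC addKr.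
  by exists ((l - l')^-1 * (al' - al)); apply/graph_linearZ/graph_linearB.
subst l'; have yy : y = y' by apply: (addIr (l *: x1)).
by subst y'; rewrite (G_fun _ _ _ Gy Gy').
Qed.

End linear_graphs.

Section hahn_banach.
Variables (R : realType) (X : lmodType R) (p : X -> R).
Hypothesis p_subadd : forall x y, p (x + y) <= p x + p y.
Hypothesis p_homo : forall (l : R) x, 0 < l -> p (l *: x) = l * p x.

Definition graph_dominated (G : set (X * R)) := forall z, G z -> z.2 <= p z.1.

Section one_step_extension.
Variables (G : set (X * R)) (x1 : X).
Hypotheses (G_linear : graph_linear G) (G00 : G (0, 0)) (G_dom : graph_dominated G).

(* The admissible values at [x1] form the nonempty interval
   [sup (al - p (y - x1)), inf (p (w + x1) - be)]. *)
Let admissible_value : exists c,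
  (forall y al, G (y, al) -> al - p (y - x1) <= c) /\
  (forall w be, G (w, be) -> c <= p (w + x1) - be).
Proof.
have sep y al w be : G (y, al) -> G (w, be) -> al - p (y - x1) <= p (w + x1) - be.
  move=> Gy Gw; have := G_dom (G_linear 1 Gy Gw); rewrite /= scale1r mul1r => dom.
  have := p_subadd (y - x1) (w + x1); rewrite addrACA addNr addr0; lra.
pose E := [set t | exists y al, G (y, al) /\ t = al - p (y - x1)].
have E_sup : has_sup E.
  split; first by exists (0 - p (0 - x1)), 0, 0.
  by exists (p (0 + x1) - 0) => _ [y [al [Gy ->]]]; exact: sep.
exists (sup E); split=> [y al Gy|w be Gw]; first by apply: sup_upper_bound => //; exists y, al.
by apply: ge_sup; [case: E_sup | move=> _ [y [al [Gy ->]]]; exact: sep].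
Qed.

Lemma graph_adjoin_dominated : exists c, graph_dominated (graph_adjoin G x1 c).
Proof.
have [c [c_ge c_le]] := admissible_value; exists c => _ [y [al [l [Gy ->]]]] /=.
have [l_lt0|l_gt0|->] := ltgtP l 0; last by rewrite scale0r mul0r !addr0; exact: G_dom Gy.
- have nl_gt0 : 0 < - l by rewrite oppr_gt0.
  have := c_ge _ _ (graph_linearZ G_linear G00 (- l)^-1 Gy).
  have -> : y + l *: x1 = - l *: ((- l)^-1 *: y - x1).
    by rewrite scalerBr scalerA mulfV ?gt_eqF // scale1r scaleNr opprK.
  rewrite p_homo // -(ler_pM2l nl_gt0) mulrBr mulrA mulfV ?gt_eqF // mul1r; lra.
- have := c_le _ _ (graph_linearZ G_linear G00 l^-1 Gy).
  have -> : y + l *: x1 = l *: (l^-1 *: y + x1).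
    by rewrite scalerDr scalerA mulfV ?gt_eqF // scale1r.
  rewrite p_homo // -(ler_pM2l l_gt0) mulrBr mulrA mulfV ?gt_eqF // mul1r; lra.
Qed.

End one_step_extension.

Variable G0 : set (X * R).
Hypotheses (G0_linear : graph_linear G0) (G0_functional : graph_functional G0).
Hypotheses (G0_00 : G0 (0, 0)) (G0_dom : graph_dominated G0).

Let extends G :=
  [/\ G0 `<=` G, graph_linear G, graph_functional G & graph_dominated G].

Let chain_bigcup (F : set (set (X * R))) :
  F `<=` [set G | G = set0 \/ extends G] -> total_on F subset ->
  (\bigcup_(G in F) G) = set0 \/ extends (\bigcup_(G in F) G).
Proof.
move=> F_ext F_chain.
have [[G1 FG1 [z1 G1z1]]|] := pselect (exists2 G, F G & G !=set0); last first.
  move=> F0; left; apply/seteqP; split => // z [G FG Gz].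
  by apply: F0; exists G => //; exists z.
have F_extends G z : F G -> G z -> extends G.
  by move=> FG Gz; case: (F_ext G FG) => // G_0; rewrite G_0 in Gz.
have common z w : (\bigcup_(G in F) G) z -> (\bigcup_(G in F) G) w ->
    exists2 G, F G & G z /\ G w.
  move=> [Gz FGz Gzz] [Gw FGw Gww].
  have [GzGw|GwGz] := F_chain _ _ FGz FGw; first by exists Gw => //; split => //; exact: GzGw.
  by exists Gz => //; split => //; exact: GwGz.
right; split.
- by move=> y G0y; exists G1 => //; have [G0G1 _ _ _] := F_extends _ _ FG1 G1z1; exact: G0G1.
- move=> a z w Uz Uw; have [G FG [Gz Gw]] := common _ _ Uz Uw.
  by exists G => //; have [_ G_lin _ _] := F_extends _ _ FG Gz; exact: G_lin.
- move=> x a b Ua Ub; have [G FG [Ga Gb]] := common _ _ Ua Ub.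
  by have [_ _ G_fun _] := F_extends _ _ FG Ga; exact: G_fun Ga Gb.
- by move=> z [G FG Gz]; have [_ _ _ G_dom] := F_extends _ _ FG Gz; exact: G_dom.
Qed.

Theorem hahn_banach : exists F : X -> R,
  [/\ forall (a : R) u v, F (a *: u + v) = a * F u + F v,
      forall x, F x <= p x & forall z, G0 z -> F z.1 = z.2].
Proof.
have [A [A_ext A_max]] := Zorn_bigcup chain_bigcup.
have [G0A A_lin A_fun A_dom] : extends A.
  case: A_ext => // A0; exfalso; apply: (A_max G0); last by right; split.
  by rewrite A0; split => [z|/(_ _ G0_00)].
have A_total x : exists a, A (x, a).
  apply: contrapT => x_new.
  have A00 : A (0, 0) := G0A _ G0_00.
  have [c c_dom] := graph_adjoin_dominated x A_lin A00 A_dom.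
  apply: (A_max (graph_adjoin A x c)).
    split; first exact: graph_adjoin_sub.
    by move=> /(_ _ (@graph_adjoin_point _ _ A x c A00)) Ax; apply: x_new; exists c.
  right; split => //.
  - by move=> z /G0A; exact: graph_adjoin_sub.
  - exact: graph_adjoin_linear.
  - exact: graph_adjoin_functional.
pose F x := xget 0 (fun a => A (x, a)).
have AF x : A (x, F x) := xgetPex 0 (A_total x).
exists F; split => [a u v|x|[x a] /G0A Ax]; last exact: A_fun (AF x) Ax.
  exact: A_fun (AF _) (A_lin a _ _ (AF u) (AF v)).
exact: A_dom (AF x).
Qed.

End hahn_banach.

Section dual_functionals.
Variables (R : realType) (X : normedModType R).

Definition nonzero_dual (f : X -> R) := dual_elt f /\ exists x, f x != 0.

Section linearity.
Variable f : X -> R.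
Hypothesis f_lin : forall (a : R) u v, f (a *: u + v) = a * f u + f v.

Lemma dual_linear0 : f 0 = 0.
Proof. by have := f_lin 1 0 0; rewrite scale1r addr0 mul1r -{1}[f 0]addr0 => /addrI. Qed.

Lemma dual_linearZ (a : R) u : f (a *: u) = a * f u.
Proof. by rewrite -[a *: u]addr0 f_lin dual_linear0 addr0. Qed.

Lemma dual_linearD u v : f (u + v) = f u + f v.
Proof. by rewrite -[u in LHS]scale1r f_lin mul1r. Qed.

Lemma dual_linearN u : f (- u) = - f u.
Proof. by rewrite -scaleN1r dual_linearZ mulN1r. Qed.

Lemma dual_linearB u v : f (u - v) = f u - f v.
Proof. by rewrite dual_linearD dual_linearN. Qed.

End linearity.

Lemma bounded_linear_dual (f : X -> R) (k : R) : 0 < k ->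
  (forall (a : R) u v, f (a *: u + v) = a * f u + f v) ->
  (forall u, `|f u| <= k * `|u|) -> dual_elt f.
Proof.
move=> k_gt0 f_lin f_bnd; split => // x; apply/cvgrPdist_lt => e e_gt0.
near=> t; rewrite -dual_linearB //; apply: le_lt_trans (f_bnd _) _.
rewrite -ltr_pdivlMl //; near: t.
by apply: cvgr_dist_lt; [exact: cvg_id | rewrite mulr_gt0 ?invr_gt0].
Unshelve. all: by end_near. Qed.

Lemma dual_separation (V : set X) (x0 : X) (d : R) :
  V 0 -> (forall (a : R) u v, V u -> V v -> V (a *: u + v)) ->
  0 < d -> (forall y, V y -> d <= `|x0 - y|) ->
  exists F, [/\ dual_elt F, F x0 = 1 & forall y, V y -> F y = 0].
Proof.
move=> V_0 V_lin d_gt0 V_far.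
have VZ (a : R) u : V u -> V (a *: u) by move=> Vu; rewrite -[_ *: _]addr0; exact: V_lin.
pose p (x : X) : R := `|x| / d.
have p_subadd x y : p (x + y) <= p x + p y.
  by rewrite /p -mulrDl ler_pM2r ?invr_gt0 // ler_normD.
have p_homo (l : R) x : 0 < l -> p (l *: x) = l * p x.
  by move=> l_gt0; rewrite /p normrZ gtr0_norm // mulrA.
pose V0 := [set z : X * R | V z.1 /\ z.2 = 0].
have V0_lin : graph_linear V0.
  by move=> a [u _] [v _] [/= Vu ->] [/= Vv ->]; split; [exact: V_lin | rewrite mulr0 addr0].
have V0_00 : V0 (0, 0) by split.
have x0_new : ~ (exists a, V0 (x0, a)).
  by move=> [a [/V_far]]; rewrite subrr normr0 leNgt d_gt0.
pose G := graph_adjoin V0 x0 1.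
have G_dom : graph_dominated p G.
  move=> _ [v [_ [l [[/= Vv ->] ->]]]] /=; rewrite add0r mulr1.
  have [l_le0|l_gt0] := leP l 0.
    exact: le_trans l_le0 (divr_ge0 (normr_ge0 _) (ltW d_gt0)).
  have -> : v + l *: x0 = l *: (x0 - (- l^-1) *: v).
    by rewrite scalerBr scalerA mulrN mulfV ?gt_eqF // scaleN1r opprK addrC.
  by rewrite p_homo // ler_peMr ?(ltW l_gt0) // /p ler_pdivlMr // mul1r V_far //; exact: VZ.
have V0_fun : graph_functional V0 by move=> x a b [_ /= ->] [_ /= ->].
have G_lin : graph_linear G := graph_adjoin_linear V0_lin.
have G_fun : graph_functional G := graph_adjoin_functional V0_lin V0_00 V0_fun x0_new.
have G00 : G (0, 0) := graph_adjoin_sub x0 1 V0_00.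
have [F [F_lin F_le F_G]] := hahn_banach p_subadd p_homo G_lin G_fun G00 G_dom.
exists F; split.
- apply: (bounded_linear_dual (k := d^-1)) => // [|u]; first by rewrite invr_gt0.
  rewrite ler_norml; apply/andP; split.
    by rewrite lerNl -dual_linearN //; apply: le_trans (F_le _) _; rewrite /p normrN mulrC.
  by apply: le_trans (F_le _) _; rewrite /p mulrC.
- exact: F_G (graph_adjoin_point x0 1 V0_00).
- by move=> y Vy; apply: (F_G (y, 0)); apply: graph_adjoin_sub.
Qed.

Lemma lin_span0 (L : set X) : lin_span L 0.
Proof. by exists 0%N, (fun _ => 0), (fun _ => 0); split; [case | rewrite big_ord0]. Qed.

Lemma lin_span_sub (L : set X) : L `<=` lin_span L.
Proof. by move=> u Lu; exists 1%N, (fun _ => 1), (fun _ => u); rewrite big_ord1 scale1r. Qed.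

Lemma lin_span_linear (L : set X) (a : R) u v :
  lin_span L u -> lin_span L v -> lin_span L (a *: u + v).
Proof.
move=> [n [au [vu [Lu ->]]]] [m [av [vv [Lv ->]]]].
exists (n + m)%N,
  (fun k => match fintype.split k with inl i => a * au i | inr j => av j end),
  (fun k => match fintype.split k with inl i => vu i | inr j => vv j end).
split=> [k|]; first by case: (fintype.split k).
rewrite big_split_ord scaler_sumr; congr (_ + _); apply: eq_bigr => i _.
  by rewrite (unsplitK (inl _ i)) scalerA.
by rewrite (unsplitK (inr _ i)).
Qed.

Lemma annihilator0_linearly_dense (L : set X) :
  (forall F, dual_elt F -> (forall y, L y -> F y = 0) -> forall x, F x = 0) ->
  linearly_dense L.
Proof.
move=> L_ann; apply/seteqP; split => // x0 _; apply: contrapT.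
move=> /existsNP[B /not_implyP[/nbhs_ballP[d d_gt0 dB] BL]].
have L_far y : lin_span L y -> d <= `|x0 - y|.
  move=> Ly; rewrite leNgt; apply/negP => x0y; apply: BL; exists y; split => //.
  by apply: dB; rewrite -ball_normE.
have [F [F_dual F1 F0]] := dual_separation (lin_span0 L) (@lin_span_linear L) d_gt0 L_far.
have := L_ann F F_dual (fun y Ly => F0 y (lin_span_sub Ly)) x0.
by rewrite F1 => /eqP; rewrite oner_eq0.
Qed.

Lemma nonzero_dual_open (f : X -> R) : dual_elt f -> open [set x | f x != 0].
Proof. by move=> [_ f_cont]; exact: (continuousP f).1 f_cont _ (@open_neq R 0). Qed.

Lemma nonzero_dual_dense (f : X -> R) : nonzero_dual f -> dense [set x | f x != 0].
Proof.
move=> [[f_lin _] [z fz]] O [y Oy] O_open.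
have [fy0|fy] := eqVneq (f y) 0; last by exists y.
have /nbhs_ballP[e e_gt0 eO] : nbhs y O by apply: open_nbhs_nbhs.
pose t := e / 2 / (`|z| + 1).
have z1_gt0 : 0 < `|z| + 1 by rewrite ltr_wpDl.
have t_gt0 : 0 < t by rewrite !divr_gt0.
exists (y + t *: z); split; last first.
  by rewrite /= dual_linearD // fy0 add0r dual_linearZ // mulf_neq0 // gt_eqF.
apply: eO; rewrite -ball_normE /ball_ /= opprD addNKr normrN normrZ gtr0_norm //.
apply: (@le_lt_trans _ _ (t * (`|z| + 1))); first by rewrite ler_pM2l // lerDl.
by rewrite /t mulfVK ?gt_eqF // ltr_pdivrMr // ltr_pMr // ltr1n.
Qed.

Lemma dual_eq_on_ball (f g : X -> R) : dual_elt f -> dual_elt g ->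
  (forall x, `|x| <= 1 -> f x = g x) -> f = g.
Proof.
move=> [f_lin _] [g_lin _] fg_ball; apply/funext => x.
have [->|x0] := eqVneq x 0; first by rewrite !dual_linear0.
have x_gt0 : 0 < `|x| by rewrite normr_gt0.
have -> : x = `|x| *: (`|x|^-1 *: x) by rewrite scalerA mulfV ?gt_eqF // scale1r.
rewrite (dual_linearZ f_lin) (dual_linearZ g_lin) fg_ball //.
by rewrite normrZ normfV normr_id mulVf ?gt_eqF.
Qed.

End dual_functionals.

Lemma le_natSinv_le0 (R : archiRealFieldType) (a : R) :
  (forall n : nat, a <= n.+1%:R^-1) -> a <= 0.
Proof.
move=> a_le; apply/ler_addgt0Pr => e e_gt0; rewrite add0r.
have [N _ N_lt] := near_infty_natSinv_lt (PosNum e_gt0).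
exact: le_trans (a_le N) (ltW (N_lt N (leqnn N))).
Qed.

Lemma card_dual_le (R : realType) (X : normedModType R) (D : set (X -> R)) :
  dual_dense D -> D #<= [set: R] -> @dual_elt R X #<= [set: R].
Proof.
move=> [D_dual D_approx] /pcard_injP[psi psi_inj].
have /pcard_injP[code code_inj] := card_le_seqR R.
pose close (f g : X -> R) (n : nat) :=
  forall x : X, `|x| <= 1 -> `|f x - g x| <= n.+1%:R^-1 / 2.
pose approx (f : X -> R) n := xget (fun _ => 0) (fun g => D g /\ close f g n).
have approxP f n : dual_elt f -> D (approx f n) /\ close f (approx f n) n.
  move=> f_dual; apply: (@xgetPex _ _ (fun g => D g /\ close f g n)).
  have [g Dg fg] : exists2 g, D g & close f g n.
    by apply: D_approx f f_dual _ _; rewrite divr_gt0.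
  by exists g.
apply/pcard_injP; exists (fun f => code (fun n => psi (approx f n))).
move=> f g /set_mem f_dual /set_mem g_dual /code_inj fg_code.
have {fg_code}fg_approx n : approx f n = approx g n.
  apply: psi_inj; rewrite ?inE;
    [exact: (approxP f n f_dual).1 | exact: (approxP g n g_dual).1 |].
  by have := fg_code (in_setT _) (in_setT _) => /(congr1 (fun c => c n)).
apply: dual_eq_on_ball => // x x1; apply/eqP; rewrite -subr_eq0 -normr_le0.
apply: le_natSinv_le0 => n; apply: le_trans (ler_distD (approx f n x) _ _) _.
rewrite [leRHS]splitr lerD ?(approxP f n f_dual).2 //.
by rewrite distrC fg_approx (approxP g n g_dual).2.
Qed.

Lemma countable_nonzero_duals_avoid (R : realType) (X : completeNormedModType R)
  (C : set (X -> R)) : countable C -> C `<=` @nonzero_dual R X ->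
  exists x, forall f, C f -> f x != 0.
Proof.
move=> /pcard_surjP[g C_g] C_nz.
pose U i := [set x : X | C (g i) -> g i x != 0].
have U_open_dense i : open (U i) /\ dense (U i).
  have [Cgi|NCgi] := pselect (C (g i)); last first.
    have -> : U i = setT by apply/seteqP; split => // x _ /NCgi.
    by split; [exact: openT | move=> O [y Oy] _; exists y].
  have -> : U i = [set x | g i x != 0] by apply/seteqP; split => x /=; [apply | move=> + _].
  have gi_nz := C_nz _ Cgi.
  by split; [exact: nonzero_dual_open gi_nz.1 | exact: nonzero_dual_dense].
have /(_ setT)[||x [_ Ux]] := Baire U_open_dense; [by exists 0 | exact: openT |].
exists x => f Cf; have [i _ gi_f] := C_g f Cf.
have := Ux i I; rewrite /U /= gi_f; exact.
Qed.

Lemma exists_nonzero_dual (R : realType) (X : normedModType R) (D : set (X -> R)) :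
  dual_dense D -> ~ countable D -> exists f, @nonzero_dual R X f.
Proof.
move=> [D_dual _] D_unc; apply: contrapT => none; apply: D_unc.
apply: sub_countable (countable1 (fun _ : X => 0 : R)); apply: subset_card_le => g Dg.
apply/funext => x; apply: contrapT => /eqP gx; apply: none.
by exists g; split; [exact: D_dual | exists x].
Qed.

Lemma aleph1T_order T : is_aleph1 [set: T] -> exists r : T -> T -> Prop,
  (forall x y, r x y \/ r y x) /\ forall x, countable [set y | r y x].
Proof.
move=> [_ [r [r_total [_ [_ [_ r_countable]]]]]].
exists r; split=> [x y|x]; first exact: r_total.
apply: sub_countable (r_countable x I); apply: subset_card_le => y ryx; exact: conj I ryx.
Qed.

Lemma card_is_dens_aleph1 (R : realType) (X : normedModType R) T (A : set T) (S : set X) :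
  is_aleph1 A -> dens_is_aleph1 (@dense X) -> S #<= A -> ~ countable S -> card_is_dens S.
Proof.
move=> A_aleph1 [[D0 [D0_dense D0_aleph1]] dense_unc] SA S_unc.
have S_le_dense (D : set X) : dense D -> S #<= D.
  by move=> D_dense; apply: card_le_trans SA (aleph1_card_le A_aleph1 (dense_unc D D_dense)).
split=> //; exists D0; split=> //.
by apply: Cantor_Bernstein; [exact: S_le_dense | exact: aleph1_card_le D0_aleph1 S_unc].
Qed.

Section overcomplete_construction.
Variables (R : realType) (X : completeNormedModType R) (r : R -> R -> Prop).
Hypothesis r_total : forall s t, r s t \/ r t s.
Hypothesis r_countable : forall t, countable [set s | r s t].
Variables (Phi : (X -> R) -> R) (e : X -> R).
Hypothesis Phi_inj : set_inj (@dual_elt R X) Phi.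
Hypothesis e_nz : nonzero_dual e.

(* [e] is added so that [e (s t) = expR t], which makes [s] injective. *)
Let early t := [set f | nonzero_dual f /\ r (Phi f) t] `|` [set e].

Let early_nz t : early t `<=` @nonzero_dual R X.
Proof. by move=> f [[]|->]. Qed.

Let early_countable t : countable (early t).
Proof.
apply: countableU (countable1 e); apply: sub_countable (r_countable t).
apply: (card_le_inj (f := Phi)) => [f [] //|f g /set_mem[[f_dual _] _] /set_mem[[g_dual _] _]].
by apply: Phi_inj; rewrite inE.
Qed.

Lemma exists_overcomplete_family : exists s : R -> X, injective s /\
  forall L, L `<=` range s -> ~ countable L -> linearly_dense L.
Proof.
have avoid t : exists x, forall f, early t f -> f x != 0.
  exact: countable_nonzero_duals_avoid (early_countable t) (@early_nz t).
pose x t := xget 0 (fun x => forall f, early t f -> f x != 0).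
have x_avoids t f : early t f -> f (x t) != 0 := xgetPex 0 (avoid t) f.
have [[e_lin _] _] := e_nz.
pose s t := (expR t / e (x t)) *: x t.
have e_s t : e (s t) = expR t.
  by rewrite dual_linearZ // mulfVK // x_avoids //; right.
have s_avoids t f : nonzero_dual f -> r (Phi f) t -> f (s t) != 0.
  move=> f_nz rft; have [[f_lin _] _] := f_nz.
  rewrite dual_linearZ // !mulf_neq0 ?invr_eq0 ?x_avoids ?gt_eqF ?expR_gt0 //.
    by right.
  by left.
exists s; split=> [t t' ss'|L Ls L_unc]; first by apply: expR_inj; rewrite -!e_s ss'.
apply: annihilator0_linearly_dense => F F_dual FL x0; apply/eqP/negP => /negP Fx0.
apply: L_unc; apply: sub_countable (card_le_trans (card_image_le s _) (r_countable (Phi F))).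
apply: subset_card_le => _ /[dup] /Ls[t _ <-] /FL Fst; exists t => //.
have [//|rFt] := r_total t (Phi F).
by have := s_avoids t F (conj F_dual (ex_intro _ x0 Fx0)) rFt; rewrite Fst eqxx.
Qed.

End overcomplete_construction.

Unset Implicit Arguments.

Theorem corollary3p2 (R : realType) (X : completeNormedModType R) :
  CH R ->
  dens_is_aleph1 (@dense X) ->
  dens_is_aleph1 (@dual_dense R X) ->
  exists S : set X, overcomplete S.
Proof.
move=> CH_R dens_X [[D [D_dense D_aleph1]] dual_dense_unc].
have R_unc : ~ countable [set: R] := CH_R.1.
have [r [r_total r_countable]] := aleph1T_order CH_R.
have /pcard_injP[Phi Phi_inj] := card_dual_le D_dense (aleph1_card_le D_aleph1 R_unc).
have [e e_nz] := exists_nonzero_dual D_dense (dual_dense_unc D D_dense).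
have [s [s_inj s_dense]] := exists_overcomplete_family r_total r_countable Phi_inj e_nz.
have S_unc : ~ countable (range s).
  by rewrite (eq_countable (inj_card_eq (in2W s_inj))).
exists (range s); split; first exact: card_is_dens_aleph1 CH_R dens_X (card_image_le s _) S_unc.
move=> L Ls /card_eqPle[_ SL]; apply: s_dense => // L_cnt.
exact: S_unc (card_le_trans SL L_cnt).
Qed.
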